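(* Let $p\geq 1$ be an integer and let $G=\langle a,t\mid ta^pt^{-1}=a^p\rangle$ be the Baumslag--Solitar group $BS(p,p)$. Every element $x\in G$ can be written uniquely as $x=w(a,t)a^N$, where $N\in\mathbb Z$ and $w(a,t)$ is a freely reduced word belonging to $\{t,at,\ldots,a^{p-1}t,\,t^{-1},at^{-1},\ldots,a^{p-1}t^{-1}\}^*$. There exists a constant $C_1>0$ such that for every $x\in G$ with this normal form $x=w(a,t)a^N$, $$C_1(|w|+|N|)\leq \|x\|\leq |w|+|N|,$$ where $|w|$ is the number of letters of $w$ as a word over $\{a^{\pm1},t^{\pm1}\}$ and $\|x\|$ is the word length of $x$ with respect to the generating set $\{a,t\}$.
   Context: $X^*$ denotes the set of finite concatenations of words from $X$. *)

(* The Baumslag--Solitar group BS(p,p) = < a, t | t a^p t^-1 = a^p >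
   is modelled by its presentation: elements are words over {a^{±1}, t^{±1}}
   modulo the congruence generated by free cancellation and the defining relator. *)
From Stdlib Require Import List Arith ZArith Reals Relations ClassicalEpsilon.
Import ListNotations.

Inductive letter : Type := A | Ai | T | Ti.

Definition word := list letter.

Definition linv (x : letter) : letter :=
  match x with A => Ai | Ai => A | T => Ti | Ti => T end.

Inductive bs_rule (p : nat) : word -> word -> Prop :=
| rule_free : forall x : letter, bs_rule p [x; linv x] []
| rule_rel  : bs_rule p ([T] ++ repeat A p ++ [Ti]) (repeat A p).

Inductive bs_step (p : nat) : word -> word -> Prop :=
| step_ctx : forall u v l r, bs_rule p l r -> bs_step p (u ++ l ++ v) (u ++ r ++ v).

Definition bs_eq (p : nat) : word -> word -> Prop := clos_refl_sym_trans word (bs_step p).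

Definition apow (N : Z) : word :=
  if (0 <=? N)%Z then repeat A (Z.to_nat N) else repeat Ai (Z.to_nat (- N)).

Definition freely_reduced (w : word) : Prop :=
  forall (u v : word) (x : letter), w <> u ++ [x; linv x] ++ v.

Definition in_Xstar (p : nat) (w : word) : Prop :=
  exists blocks : list (nat * bool),
    Forall (fun b : nat * bool => fst b < p) blocks /\
    w = flat_map (fun b : nat * bool => repeat A (fst b) ++ [if snd b then T else Ti]) blocks.

Definition normal_form_word (p : nat) (w : word) : Prop :=
  in_Xstar p w /\ freely_reduced w.

Definition is_word_length (p : nat) (u : word) (n : nat) : Prop :=
  (exists v, bs_eq p v u /\ length v = n) /\ (forall v, bs_eq p v u -> n <= length v).

Definition wlen (p : nat) (u : word) : nat :=
  epsilon (inhabits 0) (fun n => is_word_length p u n).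

(* Right multiplication by a generator acts on pairs (w, N), w a normal form word stored as a
   stack of blocks a^i t^(+-1) with 0 <= i < p: a^(+-1) changes N, and t^e moves the central
   element a^(N - N mod p) across t^e, then either pushes the block a^(N mod p) t^e or cancels
   the top block a^i t^-e.  The pair reached by reading a word is invariant under the defining
   relations, and reading w a^N gives back (w, N); this yields existence and uniqueness of normal
   forms.  Reading a letter changes |w| + |N| by at most 2p, so reading a geodesic word for x gives
   |w| + |N| <= 2p ||x||, while w a^N itself is a word for x of length |w| + |N|. *)

From Stdlib Require Import List Arith ZArith Reals Lia Lra Relations Setoid Morphisms
  Classical ClassicalEpsilon Wf_nat.
Import ListNotations.

#[global] Instance bs_eq_Equivalence (p : nat) : Equivalence (bs_eq p).
Proof.
  split.
  - intro; apply rst_refl.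
  - intros u v; apply rst_sym.
  - intros u v w; apply rst_trans.
Qed.

Lemma bs_eq_app_l (p : nat) (l u v : word) : bs_eq p u v -> bs_eq p (l ++ u) (l ++ v).
Proof.
  induction 1 as [u v [u0 v0 lhs rhs Hr] | | | ]; try (now econstructor; eauto).
  apply rst_step. rewrite !app_assoc, <- !(app_assoc (l ++ u0)). now constructor.
Qed.

Lemma bs_eq_app_r (p : nat) (r u v : word) : bs_eq p u v -> bs_eq p (u ++ r) (v ++ r).
Proof.
  induction 1 as [u v [u0 v0 lhs rhs Hr] | | | ]; try (now econstructor; eauto).
  apply rst_step. rewrite <- !app_assoc. now constructor.
Qed.

#[global] Instance app_bs_eq_Proper (p : nat) :
  Proper (bs_eq p ==> bs_eq p ==> bs_eq p) (@app letter).
Proof.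
  intros u u' Hu v v' Hv. transitivity (u' ++ v).
  - now apply bs_eq_app_r.
  - now apply bs_eq_app_l.
Qed.

Section Presentation.
Variable p : nat.

Lemma bs_eq_rule (l r : word) : bs_rule p l r -> bs_eq p l r.
Proof.
  intro H. apply rst_step. rewrite <- (app_nil_r l), <- (app_nil_r r).
  exact (step_ctx p [] [] l r H).
Qed.

Lemma bs_eq_cancel (x : letter) : bs_eq p [x; linv x] [].
Proof. apply bs_eq_rule, rule_free. Qed.

Lemma apow_of_nat (n : nat) : apow (Z.of_nat n) = repeat A n.
Proof. unfold apow. rewrite Nat2Z.id. now destruct (Z.leb_spec 0 (Z.of_nat n)); [|lia]. Qed.

Lemma apow_opp_of_nat (n : nat) : apow (- Z.of_nat n) = repeat Ai n.
Proof.
  unfold apow. destruct n as [|n]; [reflexivity|].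
  destruct (Z.leb_spec 0 (- Z.of_nat (S n))); [lia|]. f_equal. lia.
Qed.

Lemma length_apow (N : Z) : length (apow N) = Z.abs_nat N.
Proof. unfold apow. destruct (Z.leb_spec 0 N); rewrite repeat_length; lia. Qed.

Lemma apow_snoc_A (N : Z) : bs_eq p (apow N ++ [A]) (apow (N + 1)).
Proof.
  destruct (Z_le_gt_dec 0 N).
  - replace N with (Z.of_nat (Z.to_nat N)) by lia.
    replace (Z.of_nat (Z.to_nat N) + 1)%Z with (Z.of_nat (S (Z.to_nat N))) by lia.
    rewrite !apow_of_nat, <- repeat_cons. reflexivity.
  - replace N with (- Z.of_nat (S (Z.to_nat (- N - 1))))%Z by lia.
    replace (- Z.of_nat (S (Z.to_nat (- N - 1))) + 1)%Z
      with (- Z.of_nat (Z.to_nat (- N - 1)))%Z by lia.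
    rewrite !apow_opp_of_nat. cbn [repeat].
    rewrite repeat_cons, <- app_assoc.
    change ([Ai] ++ [A]) with [Ai; linv Ai]. rewrite bs_eq_cancel, app_nil_r. reflexivity.
Qed.

Lemma apow_snoc_Ai (N : Z) : bs_eq p (apow N ++ [Ai]) (apow (N - 1)).
Proof.
  replace N with (N - 1 + 1)%Z at 1 by lia. rewrite <- apow_snoc_A, <- app_assoc.
  change ([A] ++ [Ai]) with [A; linv A]. rewrite bs_eq_cancel, app_nil_r. reflexivity.
Qed.

Lemma apow_add (M N : Z) : bs_eq p (apow M ++ apow N) (apow (M + N)).
Proof.
  destruct (Z_le_gt_dec 0 N).
  - replace N with (Z.of_nat (Z.to_nat N)) by lia. rewrite apow_of_nat.
    generalize (Z.to_nat N) as n. intro n. revert M. induction n as [|n IH]; intro M.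
    + rewrite app_nil_r, Z.add_0_r. reflexivity.
    + change (repeat A (S n)) with ([A] ++ repeat A n).
      rewrite app_assoc, apow_snoc_A, IH.
      replace (M + 1 + Z.of_nat n)%Z with (M + Z.of_nat (S n))%Z by lia. reflexivity.
  - replace N with (- Z.of_nat (Z.to_nat (- N)))%Z by lia. rewrite apow_opp_of_nat.
    generalize (Z.to_nat (- N)) as n. intro n. revert M. induction n as [|n IH]; intro M.
    + rewrite app_nil_r, Z.add_0_r. reflexivity.
    + change (repeat Ai (S n)) with ([Ai] ++ repeat Ai n).
      rewrite app_assoc, apow_snoc_Ai, IH.
      replace (M - 1 + - Z.of_nat n)%Z with (M + - Z.of_nat (S n))%Z by lia. reflexivity.
Qed.

Definition tletter (e : bool) : letter := if e then T else Ti.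

Lemma bs_eq_cancel_t (e : bool) : bs_eq p [tletter (negb e); tletter e] [].
Proof. destruct e; apply bs_eq_cancel. Qed.

Definition commutes (g h : word) : Prop := bs_eq p (g ++ h) (h ++ g).

Lemma commutes_app (g1 g2 h : word) :
  commutes g1 h -> commutes g2 h -> commutes (g1 ++ g2) h.
Proof.
  unfold commutes. intros H1 H2.
  rewrite <- app_assoc, H2, app_assoc, H1, <- app_assoc. reflexivity.
Qed.

Lemma commutes_inverse (g g' h : word) :
  bs_eq p (g ++ g') [] -> bs_eq p (g' ++ g) [] -> commutes g h -> commutes g' h.
Proof.
  unfold commutes. intros Hr Hl H.
  transitivity (g' ++ h ++ (g ++ g')); [now rewrite Hr, app_nil_r|].
  rewrite (app_assoc h), <- H, !app_assoc, Hl. reflexivity.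
Qed.

Lemma apow_opp_inverse (M : Z) : bs_eq p (apow M ++ apow (- M)) [].
Proof. rewrite apow_add, Z.add_opp_diag_r. reflexivity. Qed.

Lemma commutes_Ap_t (e : bool) : commutes (repeat A p) [tletter e].
Proof.
  pose proof (bs_eq_rule _ _ (rule_rel p)) as Hrel. unfold commutes. destruct e; cbn [tletter].
  - rewrite <- Hrel at 1. rewrite <- !app_assoc. change ([Ti] ++ [T]) with [Ti; linv Ti].
    rewrite bs_eq_cancel, app_nil_r. reflexivity.
  - rewrite <- Hrel at 2. change ([Ti] ++ [T] ++ repeat A p ++ [Ti])
      with ([Ti; linv Ti] ++ repeat A p ++ [Ti]).
    rewrite bs_eq_cancel. reflexivity.
Qed.

Lemma commutes_apow_t (N : Z) (e : bool) :
  (Z.of_nat p | N)%Z -> commutes (apow N) [tletter e].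
Proof.
  intros [k ->]. rewrite Z.mul_comm.
  assert (Hnat : forall n, commutes (repeat A (p * n)) [tletter e]).
  { induction n as [|n IH].
    - rewrite Nat.mul_0_r. unfold commutes. now rewrite app_nil_r.
    - rewrite Nat.mul_succ_r, repeat_app. apply commutes_app; [exact IH | apply commutes_Ap_t]. }
  destruct (Z_le_gt_dec 0 k).
  - replace (Z.of_nat p * k)%Z with (Z.of_nat (p * Z.to_nat k)) by lia.
    rewrite apow_of_nat. apply Hnat.
  - set (M := Z.of_nat (p * Z.to_nat (- k))).
    replace (Z.of_nat p * k)%Z with (- M)%Z by lia.
    apply (commutes_inverse (apow M)).
    + apply apow_opp_inverse.
    + rewrite <- (Z.opp_involutive M) at 2. apply apow_opp_inverse.
    + unfold M. rewrite apow_of_nat. apply Hnat.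
Qed.

End Presentation.

Lemma linv_involutive (x : letter) : linv (linv x) = x.
Proof. now destruct x. Qed.

Lemma linv_tletter (e : bool) : linv (tletter e) = tletter (negb e).
Proof. now destruct e. Qed.

Lemma freely_reduced_snoc (w : word) (x : letter) :
  freely_reduced (w ++ [x]) <-> freely_reduced w /\ (forall u, w <> u ++ [linv x]).
Proof.
  split.
  - intro H. split.
    + intros u v y E. apply (H u (v ++ [x]) y). now rewrite E, <- !app_assoc.
    + intros u E. apply (H u [] (linv x)).
      now rewrite E, linv_involutive, <- app_assoc.
  - intros [Hw Hlast] u v y E. destruct v as [|z v _] using rev_ind.
    + rewrite app_nil_r in E. change ([y; linv y]) with ([y] ++ [linv y]) in E.
      rewrite app_assoc in E. apply app_inj_tail in E as [-> ->].
      apply (Hlast u). now rewrite linv_involutive.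
    + rewrite !app_assoc in E. apply app_inj_tail in E as [-> _].
      apply (Hw u v y). now rewrite <- !app_assoc.
Qed.

Lemma freely_reduced_app_block (w : word) (i : nat) (x : letter) :
  x <> Ai -> (forall u, w <> u ++ [Ai]) ->
  freely_reduced (w ++ repeat A i ++ [x]) <->
  freely_reduced w /\ (i = 0 -> forall u, w <> u ++ [linv x]).
Proof.
  intros Hx. revert w. induction i as [|i IH]; intros w Hw.
  - cbn [repeat app]. rewrite freely_reduced_snoc. intuition.
  - change (repeat A (S i) ++ [x]) with ([A] ++ repeat A i ++ [x]). rewrite app_assoc, IH.
    + rewrite freely_reduced_snoc. split; [intros [[Hfr _] _] | intros [Hfr _]]; [easy|].
      split; [split; [exact Hfr | exact Hw] |].
      intros _ u E. apply app_inj_tail in E as [_ E]. destruct x; easy.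
    + intros u E. apply app_inj_tail in E as [_ E]. discriminate.
Qed.

Definition block_word (b : nat * bool) : word := repeat A (fst b) ++ [tletter (snd b)].

(* A stack lists the blocks a^i t^e of a normal form from the last one to the first. *)
Definition nf_word (rbs : list (nat * bool)) : word := flat_map block_word (rev rbs).

Lemma nf_word_cons (i : nat) (e : bool) (rbs : list (nat * bool)) :
  nf_word ((i, e) :: rbs) = nf_word rbs ++ repeat A i ++ [tletter e].
Proof. unfold nf_word. cbn. rewrite flat_map_app. cbn. now rewrite app_nil_r. Qed.

Definition top_dir (rbs : list (nat * bool)) : option bool := option_map snd (hd_error rbs).

Inductive reduced_stack (p : nat) : list (nat * bool) -> Prop :=
| reduced_nil : reduced_stack p []
| reduced_cons (i : nat) (e : bool) (rbs : list (nat * bool)) :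
    i < p -> (i = 0 -> top_dir rbs <> Some (negb e)) -> reduced_stack p rbs ->
    reduced_stack p ((i, e) :: rbs).

Definition state : Type := list (nat * bool) * Z.

Definition render (s : state) : word := nf_word (fst s) ++ apow (snd s).

Definition shift (k : Z) (s : state) : state := (fst s, snd s + k)%Z.

(* Right multiplication of w a^N by t^e: write N = r + p q with 0 <= r < p and move a^(pq)
   across t^e; if r = 0 and w ends with a^i t^-e, this cancels instead. *)
Definition push_t (p : nat) (e : bool) (s : state) : state :=
  let '(rbs, N) := s in
  let r := (N mod Z.of_nat p)%Z in
  match rbs with
  | (i, e') :: rest =>
      if ((r =? 0)%Z && Bool.eqb e' (negb e))%bool then (rest, Z.of_nat i + N)%Z
      else ((Z.to_nat r, e) :: rbs, N - r)%Z
  | [] => ([(Z.to_nat r, e)], N - r)%Z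
  end.

Lemma shift_0 (s : state) : shift 0 s = s.
Proof. destruct s as [rbs N]. unfold shift. cbn. now rewrite Z.add_0_r. Qed.

Lemma shift_shift (j k : Z) (s : state) : shift k (shift j s) = shift (j + k) s.
Proof. unfold shift. cbn. now rewrite Z.add_assoc. Qed.

Definition act (p : nat) (s : state) (x : letter) : state :=
  match x with
  | A => shift 1 s
  | Ai => shift (-1) s
  | T => push_t p true s
  | Ti => push_t p false s
  end.

Definition nf_state (p : nat) (u : word) : state := fold_left (act p) u ([], 0%Z).

Variant push_t_spec (p : nat) (e : bool) (rbs : list (nat * bool)) (N : Z) : state -> Prop :=
| push_t_cancel (i : nat) (rest : list (nat * bool)) :
    (N mod Z.of_nat p = 0)%Z -> rbs = (i, negb e) :: rest ->
    push_t_spec p e rbs N (rest, Z.of_nat i + N)%Z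
| push_t_block :
    ~ ((N mod Z.of_nat p = 0)%Z /\ top_dir rbs = Some (negb e)) ->
    push_t_spec p e rbs N ((Z.to_nat (N mod Z.of_nat p), e) :: rbs, N - N mod Z.of_nat p)%Z.

Lemma push_tP (p : nat) (e : bool) (rbs : list (nat * bool)) (N : Z) :
  push_t_spec p e rbs N (push_t p e (rbs, N)).
Proof.
  unfold push_t. destruct rbs as [|[i e'] rest].
  - apply push_t_block. cbn. intros [_ H]. discriminate.
  - destruct (Z.eqb_spec (N mod Z.of_nat p) 0) as [Hr|Hr],
      (Bool.eqb_spec e' (negb e)) as [He|He]; cbn.
    + subst. now apply push_t_cancel.
    + apply push_t_block. cbn. intros [_ H]. congruence.
    + apply push_t_block. cbn. intros [H _]. contradiction.
    + apply push_t_block. cbn. intros [H _]. contradiction.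
Qed.

Section NormalForm.
Variable p : nat.
Hypothesis hp : 1 <= p.

Lemma mod_p_bound (N : Z) : (0 <= N mod Z.of_nat p < Z.of_nat p)%Z.
Proof. apply Z.mod_pos_bound. lia. Qed.

Lemma push_t_reduced (e : bool) (rbs : list (nat * bool)) (N : Z) :
  reduced_stack p rbs -> reduced_stack p (fst (push_t p e (rbs, N))).
Proof.
  intro Hrbs. pose proof (mod_p_bound N) as Hr.
  destruct (push_tP p e rbs N) as [i rest _ -> | Hblock]; cbn.
  - now inversion Hrbs.
  - constructor; [lia | | exact Hrbs].
    intros H0 Htop. apply Hblock. split; [lia | exact Htop].
Qed.

Lemma act_reduced (s : state) (x : letter) :
  reduced_stack p (fst s) -> reduced_stack p (fst (act p s x)).
Proof. destruct s as [rbs N], x; cbn; try easy; apply push_t_reduced. Qed.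

Lemma fold_act_reduced (u : word) (s : state) :
  reduced_stack p (fst s) -> reduced_stack p (fst (fold_left (act p) u s)).
Proof. revert s. induction u; cbn; auto using act_reduced. Qed.

Lemma nf_state_reduced (u : word) : reduced_stack p (fst (nf_state p u)).
Proof. apply fold_act_reduced, reduced_nil. Qed.

Lemma push_t_inverse (e : bool) (rbs : list (nat * bool)) (N k : Z) :
  reduced_stack p rbs ->
  push_t p (negb e) (shift (Z.of_nat p * k) (push_t p e (rbs, N))) = (rbs, N + Z.of_nat p * k)%Z.
Proof.
  intro Hrbs. pose proof (mod_p_bound N) as Hr.
  pose proof (Z.div_mod N (Z.of_nat p) ltac:(lia)) as Hdiv.
  destruct (push_tP p e rbs N) as [i rest HN -> | Hblock]; unfold shift; cbn [fst snd].
  - inversion Hrbs as [|i' e' rest' Hi Htop Hrest]; subst.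
    assert (Hmod : ((Z.of_nat i + N + Z.of_nat p * k) mod Z.of_nat p = Z.of_nat i)%Z).
    { replace (Z.of_nat i + N + Z.of_nat p * k)%Z
        with (Z.of_nat i + (N / Z.of_nat p + k) * Z.of_nat p)%Z by lia.
      rewrite Z.mod_add by lia. apply Z.mod_small. lia. }
    destruct (push_tP p (negb e) rest (Z.of_nat i + N + Z.of_nat p * k))
      as [j rest' Hj -> | _]; rewrite Hmod in *.
    + exfalso. apply Htop; [lia | reflexivity].
    + rewrite Nat2Z.id. f_equal. lia.
  - assert (Hmod : ((N - N mod Z.of_nat p + Z.of_nat p * k) mod Z.of_nat p = 0)%Z).
    { replace (N - N mod Z.of_nat p + Z.of_nat p * k)%Z
        with ((N / Z.of_nat p + k) * Z.of_nat p)%Z by lia.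
      apply Z.mod_mul. lia. }
    destruct (push_tP p (negb e) ((Z.to_nat (N mod Z.of_nat p), e) :: rbs)
                (N - N mod Z.of_nat p + Z.of_nat p * k)) as [i rest _ Hcons | Hblock'].
    + injection Hcons as <- _ <-. f_equal. lia.
    + exfalso. apply Hblock'. split; [exact Hmod | cbn; now rewrite Bool.negb_involutive].
Qed.

Lemma fold_act_repeat (x : letter) (k : Z) (n : nat) (s : state) :
  (forall s', act p s' x = shift k s') ->
  fold_left (act p) (repeat x n) s = shift (Z.of_nat n * k) s.
Proof.
  intro Hx. revert s. induction n as [|n IH]; intro s; cbn [repeat fold_left].
  - symmetry. apply shift_0.
  - rewrite Hx, IH, shift_shift. f_equal. lia.
Qed.

Lemma fold_act_apow (M : Z) (s : state) : fold_left (act p) (apow M) s = shift M s.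
Proof.
  unfold apow. destruct (Z.leb_spec 0 M).
  - rewrite (fold_act_repeat A 1) by reflexivity. f_equal. lia.
  - rewrite (fold_act_repeat Ai (-1)) by reflexivity. f_equal. lia.
Qed.

Lemma push_t_involutive (e : bool) (rbs : list (nat * bool)) (N : Z) :
  reduced_stack p rbs -> push_t p (negb e) (push_t p e (rbs, N)) = (rbs, N).
Proof.
  intro Hrbs. rewrite <- (shift_0 (push_t p e (rbs, N))).
  replace 0%Z with (Z.of_nat p * 0)%Z at 1 by lia.
  rewrite push_t_inverse by exact Hrbs. f_equal. lia.
Qed.

Lemma fold_act_rule (l r : word) (s : state) :
  reduced_stack p (fst s) -> bs_rule p l r -> fold_left (act p) l s = fold_left (act p) r s.
Proof.
  destruct s as [rbs N]. cbn [fst]. intros Hrbs [x|].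
  - destruct x; cbn [fold_left act linv].
    + rewrite shift_shift. apply shift_0.
    + rewrite shift_shift. apply shift_0.
    + exact (push_t_involutive true rbs N Hrbs).
    + exact (push_t_involutive false rbs N Hrbs).
  - rewrite !fold_left_app, <- apow_of_nat, !fold_act_apow. cbn [fold_left act].
    pose proof (push_t_inverse true rbs N 1 Hrbs) as Hinv.
    rewrite Z.mul_1_r in Hinv. exact Hinv.
Qed.

Lemma nf_state_bs_eq (u v : word) : bs_eq p u v -> nf_state p u = nf_state p v.
Proof.
  unfold nf_state. induction 1 as [u v [u0 v0 l r Hr] | | | ]; try congruence.
  rewrite !fold_left_app. f_equal. apply fold_act_rule; [apply nf_state_reduced | exact Hr].
Qed.

Lemma render_push_t (e : bool) (s : state) :
  bs_eq p (render s ++ [tletter e]) (render (push_t p e s)).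
Proof.
  destruct s as [rbs N]. unfold render.
  pose proof (Z.div_mod N (Z.of_nat p) ltac:(lia)) as Hdiv.
  pose proof (mod_p_bound N) as Hr.
  destruct (push_tP p e rbs N) as [i rest HN -> | _]; cbn [fst snd].
  - assert (Hc : commutes p (apow N) [tletter e]).
    { apply commutes_apow_t. exists (N / Z.of_nat p)%Z. lia. }
    unfold commutes in Hc.
    rewrite nf_word_cons, <- !app_assoc, Hc, (app_assoc [tletter (negb e)]).
    change ([tletter (negb e)] ++ [tletter e]) with [tletter (negb e); tletter e].
    rewrite bs_eq_cancel_t, app_nil_l, <- apow_of_nat, apow_add. reflexivity.
  - set (r := (N mod Z.of_nat p)%Z) in *.
    assert (Hc : commutes p (apow (N - r)) [tletter e]).
    { apply commutes_apow_t. exists (N / Z.of_nat p)%Z. lia. }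
    unfold commutes in Hc.
    rewrite nf_word_cons, <- !app_assoc, <- apow_of_nat, Z2Nat.id by lia.
    rewrite <- Hc, (app_assoc (apow r)), apow_add.
    replace (r + (N - r))%Z with N by lia. reflexivity.
Qed.

Lemma act_tletter (s : state) (e : bool) : act p s (tletter e) = push_t p e s.
Proof. now destruct e. Qed.

Lemma render_act (s : state) (x : letter) : bs_eq p (render s ++ [x]) (render (act p s x)).
Proof.
  destruct s as [rbs N]. destruct x; cbn [act].
  - unfold render, shift. cbn. rewrite <- app_assoc, apow_snoc_A. reflexivity.
  - unfold render, shift. cbn. rewrite <- app_assoc, apow_snoc_Ai. reflexivity.
  - exact (render_push_t true (rbs, N)).
  - exact (render_push_t false (rbs, N)).
Qed.

Lemma bs_eq_render_nf_state (u : word) : bs_eq p u (render (nf_state p u)).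
Proof.
  unfold nf_state. induction u as [|x u IH] using rev_ind; [reflexivity|].
  rewrite fold_left_app. cbn [fold_left]. rewrite <- render_act, <- IH. reflexivity.
Qed.

Lemma nf_state_render (rbs : list (nat * bool)) (N : Z) :
  reduced_stack p rbs -> nf_state p (render (rbs, N)) = (rbs, N).
Proof.
  intro Hrbs. unfold nf_state, render. cbn [fst snd].
  rewrite fold_left_app, fold_act_apow.
  enough (Hw : fold_left (act p) (nf_word rbs) ([], 0%Z) = (rbs, 0%Z)) by (rewrite Hw; reflexivity).
  induction Hrbs as [|i e rbs Hi Htop Hrbs IH]; [reflexivity|].
  rewrite nf_word_cons, !fold_left_app, IH, (fold_act_repeat A 1) by reflexivity.
  cbn [fold_left]. rewrite act_tletter. unfold shift. cbn [fst snd].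
  replace (0 + Z.of_nat i * 1)%Z with (Z.of_nat i) by lia.
  assert (Hmod : (Z.of_nat i mod Z.of_nat p = Z.of_nat i)%Z) by (apply Z.mod_small; lia).
  destruct (push_tP p e rbs (Z.of_nat i)) as [j rest Hj -> | _]; rewrite Hmod in *.
  - exfalso. apply Htop; [lia | reflexivity].
  - rewrite Nat2Z.id. f_equal. lia.
Qed.

Lemma nf_word_snoc (rbs : list (nat * bool)) (u : word) (y : letter) :
  nf_word rbs = u ++ [y] -> exists i e rest, rbs = (i, e) :: rest /\ y = tletter e.
Proof.
  destruct rbs as [|[i e] rest]; intro E.
  - now apply app_cons_not_nil in E.
  - rewrite nf_word_cons, app_assoc in E. apply app_inj_tail in E as [_ <-]. eauto.
Qed.

Lemma freely_reduced_nf_word_cons (i : nat) (e : bool) (rbs : list (nat * bool)) :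
  freely_reduced (nf_word ((i, e) :: rbs)) <->
  freely_reduced (nf_word rbs) /\ (i = 0 -> top_dir rbs <> Some (negb e)).
Proof.
  rewrite nf_word_cons, freely_reduced_app_block, linv_tletter.
  - split; intros [Hfr Htop]; split; try exact Hfr; intros Hi.
    + intro Hdir. destruct rbs as [|[j e'] rest]; [discriminate|].
      injection Hdir as ->. apply (Htop Hi (nf_word rest ++ repeat A j)).
      now rewrite nf_word_cons, app_assoc.
    + intros u E. apply nf_word_snoc in E as (j & e' & rest & -> & He).
      apply (Htop Hi). cbn. destruct e, e'; easy.
  - destruct e; discriminate.
  - intros u E. apply nf_word_snoc in E as (j & e' & rest & _ & He). destruct e'; discriminate.
Qed.

Lemma reduced_stack_iff (rbs : list (nat * bool)) :
  reduced_stack p rbs <->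
  Forall (fun b : nat * bool => fst b < p) rbs /\ freely_reduced (nf_word rbs).
Proof.
  induction rbs as [|[i e] rest IH].
  - split; [split; [constructor | intros u v x E; now apply app_cons_not_nil in E]|constructor].
  - rewrite freely_reduced_nf_word_cons, Forall_cons_iff. split.
    + intro Hst. inversion Hst as [|i' e' rest' Hi Htop Hrest]; subst. tauto.
    + intros [[Hi Hrest] [Hfr Htop]]. constructor; tauto.
Qed.

Lemma normal_form_word_iff (w : word) :
  normal_form_word p w <-> exists rbs, reduced_stack p rbs /\ w = nf_word rbs.
Proof.
  split.
  - intros [[blocks [Hlt ->]] Hfr]. exists (rev blocks).
    assert (Hw : flat_map block_word blocks = nf_word (rev blocks))
      by (unfold nf_word; now rewrite rev_involutive).
    split; [|exact Hw]. apply reduced_stack_iff. split; [now apply Forall_rev|].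
    now rewrite <- Hw.
  - intros (rbs & Hrbs & ->). apply reduced_stack_iff in Hrbs as [Hlt Hfr].
    split; [|exact Hfr]. exists (rev rbs). split; [now apply Forall_rev | reflexivity].
Qed.

Lemma nf_state_normal_form (u w : word) (N : Z) :
  normal_form_word p w -> bs_eq p u (w ++ apow N) ->
  nf_word (fst (nf_state p u)) = w /\ snd (nf_state p u) = N.
Proof.
  intros Hw Hu. apply normal_form_word_iff in Hw as (rbs & Hrbs & ->).
  rewrite (nf_state_bs_eq _ _ Hu).
  change (nf_word rbs ++ apow N) with (render (rbs, N)). now rewrite nf_state_render.
Qed.

Lemma length_render (rbs : list (nat * bool)) (N : Z) :
  length (render (rbs, N)) = length (nf_word rbs) + Z.abs_nat N.
Proof. unfold render. cbn. now rewrite length_app, length_apow. Qed.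

Lemma length_nf_word_cons (i : nat) (e : bool) (rbs : list (nat * bool)) :
  length (nf_word ((i, e) :: rbs)) = length (nf_word rbs) + i + 1.
Proof. rewrite nf_word_cons, !length_app, repeat_length. cbn. lia. Qed.

(* Pushing a block a^r t^e adds r + 1 letters to w and takes r letters off a^N. *)
Lemma length_render_act (s : state) (x : letter) :
  length (render (act p s x)) <= length (render s) + 2 * p.
Proof.
  destruct s as [rbs N]. destruct x; cbn [act];
    try (unfold shift; cbn [fst snd]; rewrite !length_render; lia).
  all: pose proof (mod_p_bound N) as Hr; rewrite length_render.
  all: match goal with |- context [push_t p ?e (?rbs, ?N)] =>
         destruct (push_tP p e rbs N) as [i rest _ -> | _] end.
  all: rewrite length_render; try rewrite length_nf_word_cons; lia.
Qed.

Lemma length_render_nf_state (u : word) : length (render (nf_state p u)) <= 2 * p * length u.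
Proof.
  unfold nf_state. induction u as [|x u IH] using rev_ind; [cbn; lia|].
  rewrite fold_left_app, length_app. cbn [fold_left length].
  pose proof (length_render_act (fold_left (act p) u ([], 0%Z)) x). lia.
Qed.

Lemma normal_form_nf_state (u : word) : normal_form_word p (nf_word (fst (nf_state p u))).
Proof.
  apply normal_form_word_iff. exists (fst (nf_state p u)).
  split; [apply nf_state_reduced | reflexivity].
Qed.

Lemma normal_form_length_le (v w : word) (N : Z) :
  normal_form_word p w -> bs_eq p v (w ++ apow N) ->
  length w + Z.abs_nat N <= 2 * p * length v.
Proof.
  intros Hw Hv. destruct (nf_state_normal_form v w N Hw Hv) as [<- <-].
  rewrite <- length_render, <- surjective_pairing. apply length_render_nf_state.
Qed.

End NormalForm.

Lemma wlen_spec (p : nat) (u : word) : is_word_length p u (wlen p u).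
Proof.
  unfold wlen. apply epsilon_spec.
  set (Len := fun n => exists v, bs_eq p v u /\ length v = n).
  destruct (dec_inh_nat_subset_has_unique_least_element Len) as (n & [[v [Hv Hn]] Hmin] & _).
  - intro n. apply classic.
  - exists (length u), u. split; reflexivity.
  - exists n. split; [now exists v|]. intros v' Hv'. apply Hmin. now exists v'.
Qed.

Open Scope R_scope.

Theorem lemma3p3 (p : nat) (hp : (1 <= p)%nat) :
  (forall u : word, exists! wN : word * Z,
      normal_form_word p (fst wN) /\ bs_eq p u (fst wN ++ apow (snd wN))) /\
  (exists C1 : R, 0 < C1 /\
    forall (u w : word) (N : Z),
      normal_form_word p w -> bs_eq p u (w ++ apow N) ->
      C1 * INR (length w + Z.abs_nat N) <= INR (wlen p u) /\
      (wlen p u <= length w + Z.abs_nat N)%nat).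
Proof.
  split.
  - intro u. exists (nf_word (fst (nf_state p u)), snd (nf_state p u)). split.
    + split; [apply (normal_form_nf_state p hp) | apply (bs_eq_render_nf_state p hp)].
    + intros [w N] [Hw Hu]. cbn in *.
      destruct (nf_state_normal_form p hp u w N Hw Hu) as [-> ->]. reflexivity.
  - exists (/ (2 * INR p)). split.
    { apply Rinv_0_lt_compat. apply lt_0_INR in hp. lra. }
    intros u w N Hw Hu. destruct (wlen_spec p u) as [[v [Hv <-]] Hmin]. split.
    + pose proof (normal_form_length_le p hp v w N Hw (transitivity Hv Hu)) as Hbound.
      apply le_INR in Hbound. rewrite !mult_INR in Hbound. apply lt_0_INR in hp.
      apply (Rmult_le_reg_l (2 * INR p)); [lra|].
      rewrite <- Rmult_assoc, Rinv_r by lra. cbn [INR] in Hbound. lra.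
    + rewrite <- (length_apow N), <- length_app. apply Hmin. now symmetry.
Qed.
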